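(* The map $\Phi$ has the following properties: (P1) $\Phi$ is linear; (P2) $\Phi(X^\top)=\Phi(X)^\top$ for all $X$; (P3) for every skew-symmetric $X$, $\Phi(X)=P_qXP_q^\top$; (P4) if $X$ is positive semidefinite then so is $\Phi(X)$; (P5) if all entries of $X$ are nonnegative then all entries of $\Phi(X)$ are nonnegative; (P6) $\Phi(J)=J$; (P7) if moreover $P=P^\top$, then $\mathrm{Tr}\,\Phi(X)\le\mathrm{Tr}\,X$ for every positive semidefinite $X$.
   Context: $P=(p_{ij})$ is a row-stochastic $N\times N$ matrix, $q\in[0,1]$, $P_q=(1-q)I+qP$, $J=\mathbf 1\mathbf 1^\top/N$ with $\mathbf 1$ the all-ones vector. $\beta_1,\dots,\beta_N$ are independent random variables in $\{1,\dots,N\}$ with $\mathbb P(\beta_i=j)=p_{ij}$, $e_i$ the standard basis vectors, $K=(1-q)I+q\sum_i e_ie_{\beta_i}^\top$, and $\Phi(X)=\mathbb E[KXK^\top]$ for $X\in\mathbb R^{N\times N}$. *)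

From HB Require Import structures.
From mathcomp Require Import all_boot all_order all_algebra.
Set Implicit Arguments. Unset Strict Implicit. Unset Printing Implicit Defensive.
Import Order.TTheory GRing.Theory Num.Theory.
Local Open Scope ring_scope.

Section Defs.
Variables (R : realFieldType) (N : nat).

Definition row_stochastic (P : 'M[R]_N) : Prop :=
  (forall i j, 0 <= P i j) /\ (forall i, \sum_j P i j = 1).

Definition Pq (q : R) (P : 'M[R]_N) : 'M[R]_N := (1 - q)%:M + q *: P.

Definition Jmx : 'M[R]_N := (N%:R)^-1 *: const_mx 1.

(* A realisation b of (beta_1,...,beta_N); K = (1-q) I + q sum_i e_i e_{b i}^T *)
Definition Kmx (q : R) (b : {ffun 'I_N -> 'I_N}) : 'M[R]_N :=
  (1 - q)%:M + q *: \sum_i delta_mx i (b i).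

(* Probability of the realisation b when the beta_i are independent with
   P(beta_i = j) = p_ij (product distribution). *)
Definition beta_prob (P : 'M[R]_N) (b : {ffun 'I_N -> 'I_N}) : R :=
  \prod_i P i (b i).

Definition Phi (P : 'M[R]_N) (q : R) (X : 'M[R]_N) : 'M[R]_N :=
  \sum_(b : {ffun 'I_N -> 'I_N}) beta_prob P b *: (Kmx q b *m X *m (Kmx q b)^T).

Definition skew_symmetric (X : 'M[R]_N) : Prop := X^T = - X.

Definition psd (X : 'M[R]_N) : Prop :=
  X^T = X /\ forall v : 'rV[R]_N, 0 <= (v *m X *m v^T) 0 0.

Definition entrywise_nonneg (X : 'M[R]_N) : Prop := forall i j, 0 <= X i j.

End Defs.

From HB Require Import structures.
From mathcomp Require Import all_boot all_order all_algebra.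
From mathcomp Require Import ring lra.
Set Implicit Arguments. Unset Strict Implicit. Unset Printing Implicit Defensive.
Import Order.TTheory GRing.Theory Num.Theory.
Local Open Scope ring_scope.

(* Row i of the
   random matrix K is (1-q) e_i + q e_{beta_i}, so the (i,j) entry of K X K^T
   is a bilinear expression in the rows i and j of K, and it depends on the
   realisation b only through b i and b j.  The expectation over the product
   distribution factorises: E[prod_i w_i(beta_i)] = prod_i sum_k p_ik w_i(k),
   which gives the one- and two-coordinate marginals we need.
   - (P1), (P2), (P4) hold termwise, since each K X K^T is linear in X,
     commutes with transposition and preserves positive semidefiniteness.
   - (P5) holds because the entries of K are nonnegative for q in [0,1].
   - (P6) holds because K has unit row sums, so K J K^T = J.
   - (P3): off the diagonal, independence of beta_i and beta_j turns the
     expectation into the (i,j) entry of P_q X P_q^T; on the diagonal both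
     sides are quadratic forms of a skew matrix, hence vanish.
   - (P7): the diagonal entry Phi(X)_ii only involves X_ii, X_im, X_mi, X_mm;
     the bound X_im + X_mi <= X_ii + X_mm for psd X, and the column sums of a
     symmetric stochastic P, give Tr Phi(X) <= Tr X. *)

Section EntryCalculus.
Variables (R : comPzRingType) (N : nat).

Lemma sum_delta_l (f : 'I_N -> R) i : \sum_k (i == k)%:R * f k = f i.
Proof.
rewrite (bigD1 i) //= eqxx mul1r big1 ?addr0 // => k.
by rewrite eq_sym => /negbTE ->; rewrite mul0r.
Qed.

Lemma sum_delta_r (f : 'I_N -> R) k : \sum_m f m * (m == k)%:R = f k.
Proof.
by rewrite -[RHS](sum_delta_l f k); apply: eq_bigr => m _; rewrite mulrC eq_sym.
Qed.

Lemma bilinear_entry p (A B : 'M[R]_(p, N)) (X : 'M[R]_N) i j :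
  (A *m X *m B^T) i j = \sum_k \sum_l A i k * X k l * B j l.
Proof.
rewrite !mxE exchange_big /=; apply: eq_bigr => l _.
by rewrite !mxE mulr_suml; apply: eq_bigr => k _; rewrite ?mxE.
Qed.

Lemma quad_two_deltas (X : 'M[R]_N) a c i m :
  \sum_k \sum_l (a * (i == k)%:R + c * (m == k)%:R) * X k l
                * (a * (i == l)%:R + c * (m == l)%:R)
  = a * a * X i i + a * c * X i m + c * a * X m i + c * c * X m m.
Proof.
set u := fun k : 'I_N => a * (i == k)%:R + c * (m == k)%:R.
have inner k : \sum_l u k * X k l * u l = u k * (a * X k i + c * X k m).
  transitivity (\sum_l ((i == l)%:R * (u k * a * X k l)
                        + (m == l)%:R * (u k * c * X k l))).
    by apply: eq_bigr => l _; rewrite /u; ring.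
  by rewrite big_split /= !sum_delta_l; ring.
under eq_bigr do rewrite inner.
transitivity (\sum_k ((i == k)%:R * (a * (a * X k i + c * X k m))
                      + (m == k)%:R * (c * (a * X k i + c * X k m)))).
  by apply: eq_bigr => k _; rewrite /u; ring.
by rewrite big_split /= !sum_delta_l; ring.
Qed.

End EntryCalculus.

Lemma skew_quad_form (R : numFieldType) N (X : 'M[R]_N) (u : 'I_N -> R) :
  (forall k l, X l k = - X k l) -> \sum_k \sum_l u k * X k l * u l = 0.
Proof.
move=> Xskew; set S := (X in X = 0).
have SN : S = - S.
  rewrite /S {1}exchange_big /= -sumrN; apply: eq_bigr => k _.
  by rewrite -sumrN; apply: eq_bigr => l _; rewrite Xskew; ring.
by apply/eqP; rewrite -[_ == 0]/(false || _) -(mulrn_eq0 S 2) mulr2n {1}SN addNr.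
Qed.

Section ProductDistribution.
Variables (R : realFieldType) (N : nat) (P : 'M[R]_N).

Lemma expect_prod (w : 'I_N -> 'I_N -> R) :
  \sum_b beta_prob P b * \prod_i w i (b i) = \prod_i \sum_k P i k * w i k.
Proof.
rewrite bigA_distr_bigA /=; apply: eq_bigr => b _.
by rewrite /beta_prob -big_split.
Qed.

Hypothesis rows : forall i, \sum_j P i j = 1.

Lemma expect_prod_support (w : 'I_N -> 'I_N -> R) (A : pred 'I_N) :
  (forall i k, ~~ A i -> w i k = 1) ->
  \sum_b beta_prob P b * \prod_i w i (b i) = \prod_(i | A i) \sum_k P i k * w i k.
Proof.
move=> w1; rewrite expect_prod (bigID A) /= [X in _ * X]big1 ?mulr1 //.
by move=> i iA; rewrite -(rows i); apply: eq_bigr => k _; rewrite w1 ?mulr1.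
Qed.

Lemma expect_one : \sum_b beta_prob P b = 1.
Proof.
have := @expect_prod_support (fun _ _ => 1) pred0 (fun _ _ _ => erefl).
by rewrite big_pred0_eq => <-; apply: eq_bigr => b _; rewrite big1_eq mulr1.
Qed.

Lemma expect_coord (g : 'I_N -> R) i :
  \sum_b beta_prob P b * g (b i) = \sum_k P i k * g k.
Proof.
pose w i' k := if i' == i then g k else 1.
have := @expect_prod_support w (pred1 i) (fun i' k => ifN_eq _ _).
rewrite big_pred1_eq /w eqxx => prod_eq.
transitivity (\sum_b beta_prob P b * \prod_i' w i' (b i')); last by rewrite prod_eq.
by apply: eq_bigr => b _; rewrite (bigD1 i) //= /w eqxx big1 ?mulr1 // => i' /negbTE ->.
Qed.

Lemma expect_two_coords (g h : 'I_N -> R) i j : i != j ->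
  \sum_b beta_prob P b * (g (b i) * h (b j)) =
  (\sum_k P i k * g k) * (\sum_k P j k * h k).
Proof.
move=> nij; have nji : (j == i) = false by rewrite eq_sym (negbTE nij).
pose w i' k := if i' == i then g k else if i' == j then h k else 1.
transitivity (\sum_b beta_prob P b * \prod_i' w i' (b i')).
  apply: eq_bigr => b _; rewrite (bigD1 i) //= (bigD1 j) /= ?nji //.
  rewrite /w eqxx nji eqxx big1 ?mulr1 //.
  by move=> i' /andP[/negbTE -> /negbTE ->].
rewrite (@expect_prod_support w (fun i' => (i' == i) || (i' == j))); last first.
  by move=> i' k; rewrite negb_or /w => /andP[/negbTE -> /negbTE ->].
rewrite [\prod_(_ | _) _](bigD1 i) ?eqxx //= [\prod_(_ | _) _](bigD1 j) ?eqxx ?orbT ?nji //=.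
rewrite [\prod_(_ | _) _]big_pred0 ?mulr1; last first.
  by move=> i'; case: (i' == i); case: (i' == j).
by congr (_ * _); apply: eq_bigr => k _; rewrite /w ?eqxx ?nji.
Qed.

End ProductDistribution.

(* Positive semidefinite matrices satisfy X_im + X_mi <= X_ii + X_mm, the
   quadratic form at e_i - e_m being nonnegative. *)
Lemma psd_cross_le (R : realFieldType) N (X : 'M[R]_N) i m :
  psd X -> X i m + X m i <= X i i + X m m.
Proof.
move=> [_ Xpsd]; have := Xpsd (\row_k (1 * (i == k)%:R + (-1) * (m == k)%:R)).
rewrite bilinear_entry; under eq_bigr do under eq_bigr do rewrite !mxE.
by rewrite quad_two_deltas => h; lra.
Qed.

Section RandomMatrix.
Variables (R : realFieldType) (N : nat) (P : 'M[R]_N) (q : R).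

(* Entry k of row i of K when beta_i = m: row i is (1-q) e_i + q e_m. *)
Definition kcoef (i m k : 'I_N) : R := (1 - q) * (i == k)%:R + q * (m == k)%:R.

Lemma Kmx_entry b i k : Kmx q b i k = kcoef i (b i) k.
Proof.
rewrite /Kmx /kcoef !mxE summxE mulr_natr; congr (_ + _).
rewrite (bigD1 i) //= mxE eqxx /= big1 ?addr0 ?(eq_sym k) //.
by move=> i' ne; rewrite mxE eq_sym (negbTE ne).
Qed.

Lemma KXK_entry b (X : 'M[R]_N) i j :
  (Kmx q b *m X *m (Kmx q b)^T) i j
  = \sum_k \sum_l kcoef i (b i) k * X k l * kcoef j (b j) l.
Proof. by rewrite bilinear_entry; do 2!apply: eq_bigr => ? _; rewrite !Kmx_entry. Qed.

Lemma Phi_entry X i j :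
  Phi P q X i j = \sum_b beta_prob P b * (Kmx q b *m X *m (Kmx q b)^T) i j.
Proof. by rewrite /Phi summxE; apply: eq_bigr => b _; rewrite mxE. Qed.

Lemma Phi_linear (a : R) (X Y : 'M[R]_N) :
  Phi P q (a *: X + Y) = a *: Phi P q X + Phi P q Y.
Proof.
rewrite /Phi scaler_sumr -big_split /=; apply: eq_bigr => b _.
by rewrite mulmxDr mulmxDl -scalemxAr -scalemxAl scalerDr !scalerA mulrC.
Qed.

Lemma Phi_trmx (X : 'M[R]_N) : Phi P q X^T = (Phi P q X)^T.
Proof.
apply/matrixP => i j; rewrite [RHS]mxE !Phi_entry; apply: eq_bigr => b _.
have -> : Kmx q b *m X^T *m (Kmx q b)^T = (Kmx q b *m X *m (Kmx q b)^T)^T.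
  by rewrite !trmx_mul trmxK mulmxA.
by rewrite mxE.
Qed.

Lemma kcoef_sum i m : \sum_k kcoef i m k = 1.
Proof.
transitivity (\sum_k ((i == k)%:R * (1 - q) + (m == k)%:R * q)).
  by apply: eq_bigr => k _; rewrite /kcoef; ring.
by rewrite big_split /= (sum_delta_l (fun _ => 1 - q)) (sum_delta_l (fun _ => q)) subrK.
Qed.

Hypothesis rows : forall i, \sum_j P i j = 1.

(* The mean of K is P_q. *)
Lemma expect_kcoef i k : \sum_m P i m * kcoef i m k = Pq q P i k.
Proof.
rewrite /Pq !mxE -mulr_natr.
transitivity (\sum_m ((1 - q) * (i == k)%:R * P i m + (q * P i m) * (m == k)%:R)).
  by apply: eq_bigr => m _; rewrite /kcoef; ring.
by rewrite big_split /= -mulr_sumr rows mulr1 (sum_delta_r (fun m => q * P i m)).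
Qed.

Lemma Phi_diag X i : Phi P q X i i = \sum_m P i m *
  ((1 - q) * (1 - q) * X i i + (1 - q) * q * X i m + q * (1 - q) * X m i + q * q * X m m).
Proof.
rewrite Phi_entry; under eq_bigr do rewrite KXK_entry.
rewrite (expect_coord rows (fun m => \sum_k \sum_l kcoef i m k * X k l * kcoef i m l)).
by apply: eq_bigr => m _; rewrite /kcoef quad_two_deltas.
Qed.

(* (P6): K J K^T = J for every realisation, as K has unit row sums. *)
Lemma Phi_J : Phi P q (Jmx R N) = Jmx R N.
Proof.
have KJ b : Kmx q b *m Jmx R N *m (Kmx q b)^T = Jmx R N.
  rewrite /Jmx -scalemxAr -scalemxAl; congr (_ *: _).
  have K1 : Kmx q b *m (const_mx 1 : 'M[R]_N) = const_mx 1.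
    apply/matrixP => i j; rewrite !mxE -[RHS](kcoef_sum i (b i)).
    by apply: eq_bigr => k _; rewrite [const_mx 1 _ _]mxE mulr1 Kmx_entry.
  rewrite K1; apply/matrixP => i j; rewrite !mxE -[RHS](kcoef_sum j (b j)).
  by apply: eq_bigr => k _; rewrite [const_mx 1 _ _]mxE mul1r mxE Kmx_entry.
by rewrite /Phi (eq_bigr _ (fun b _ => congr1 _ (KJ b))) -scaler_suml expect_one ?scale1r.
Qed.

(* (P3): off the diagonal, beta_i and beta_j are independent and
   E[K] = P_q; on the diagonal both sides are skew quadratic forms. *)
Lemma Phi_skew (X : 'M[R]_N) :
  skew_symmetric X -> Phi P q X = Pq q P *m X *m (Pq q P)^T.
Proof.
move=> Xskew; have Xkl k l : X l k = - X k l.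
  by have := congr1 (fun M : 'M[R]_N => M k l) Xskew; rewrite !mxE.
apply/matrixP => i j; rewrite Phi_entry bilinear_entry.
under eq_bigr do rewrite KXK_entry.
have [<-|nij] := eqVneq i j.
  rewrite [RHS](skew_quad_form (fun k => Pq q P i k)) // big1 // => b _.
  by rewrite (skew_quad_form (fun k => kcoef i (b i) k)) // mulr0.
under eq_bigr do rewrite mulr_sumr; rewrite exchange_big; apply: eq_bigr => k _.
under eq_bigr do rewrite mulr_sumr; rewrite exchange_big; apply: eq_bigr => l _ /=.
transitivity (X k l * \sum_b beta_prob P b * (kcoef i (b i) k * kcoef j (b j) l)).
  by rewrite mulr_sumr; apply: eq_bigr => b _; ring.
rewrite (expect_two_coords rows (fun m => kcoef i m k) (fun m => kcoef j m l) nij).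
by rewrite !expect_kcoef; ring.
Qed.

Hypothesis P_ge0 : forall i j, 0 <= P i j.
Hypothesis q_ge0 : 0 <= q.
Hypothesis q_le1 : q <= 1.

Lemma kcoef_ge0 i m k : 0 <= kcoef i m k.
Proof. by rewrite /kcoef addr_ge0 // mulr_ge0 // subr_ge0. Qed.

Lemma beta_prob_ge0 b : 0 <= beta_prob P b.
Proof. exact: prodr_ge0. Qed.

(* (P4): v (K X K^T) v^T is the quadratic form of X at v K. *)
Lemma Phi_psd (X : 'M[R]_N) : psd X -> psd (Phi P q X).
Proof.
move=> [XT Xpsd]; split; first by rewrite -Phi_trmx XT.
move=> v; rewrite /Phi mulmx_sumr mulmx_suml summxE; apply: sumr_ge0 => b _.
rewrite -scalemxAr -scalemxAl mxE mulr_ge0 ?beta_prob_ge0 //.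
have -> : v *m (Kmx q b *m X *m (Kmx q b)^T) *m v^T
    = (v *m Kmx q b) *m X *m (v *m Kmx q b)^T by rewrite trmx_mul !mulmxA.
exact: Xpsd.
Qed.

(* (P5): all entries of K are nonnegative. *)
Lemma Phi_nonneg (X : 'M[R]_N) : entrywise_nonneg X -> entrywise_nonneg (Phi P q X).
Proof.
move=> X_ge0 i j; rewrite Phi_entry; apply: sumr_ge0 => b _.
rewrite mulr_ge0 ?beta_prob_ge0 // KXK_entry.
by do 2!apply: sumr_ge0 => ? _; rewrite !mulr_ge0 ?kcoef_ge0.
Qed.

(* (P7), for symmetric P: by psd_cross_le each summand of Phi(X)_ii is at most
   P_im ((1-q) X_ii + q X_mm), and the columns of P also sum to 1. *)
Lemma Phi_trace_le (X : 'M[R]_N) :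
  P^T = P -> psd X -> \tr (Phi P q X) <= \tr X.
Proof.
move=> Psym Xpsd.
have cols m : \sum_i P i m = 1.
  rewrite -(rows m); apply: eq_bigr => i _.
  by have := congr1 (fun M : 'M[R]_N => M i m) Psym; rewrite mxE.
rewrite /mxtrace; under eq_bigr do rewrite Phi_diag.
apply: (@le_trans _ _ (\sum_i \sum_m P i m * ((1 - q) * X i i + q * X m m))).
  apply: ler_sum => i _; apply: ler_sum => m _; apply: ler_wpM2l => //.
  have := psd_cross_le i m Xpsd; have : 0 <= q * (1 - q) by rewrite mulr_ge0 ?subr_ge0.
  by nra.
under eq_bigr do rewrite (eq_bigr _ (fun m _ => mulrDr _ _ _)) big_split /=.
rewrite big_split [X in _ + X <= _]exchange_big /=.
under eq_bigr do rewrite -mulr_suml rows mul1r.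
under [X in _ + X <= _]eq_bigr do rewrite -mulr_suml cols mul1r.
by rewrite -!mulr_sumr -mulrDl subrK mul1r.
Qed.

End RandomMatrix.

Theorem proposition1 (R : realFieldType) (N : nat) (P : 'M[R]_N) (q : R) :
  row_stochastic P -> 0 <= q <= 1 ->
  (* P1 *) (forall (a : R) (X Y : 'M[R]_N),
                  Phi P q (a *: X + Y) = a *: Phi P q X + Phi P q Y) /\
      (* P2 *) (forall X : 'M[R]_N, Phi P q X^T = (Phi P q X)^T) /\
      (* P3 *) (forall X : 'M[R]_N, skew_symmetric X -> Phi P q X = Pq q P *m X *m (Pq q P)^T) /\
      (* P4 *) (forall X : 'M[R]_N, psd X -> psd (Phi P q X)) /\
      (* P5 *) (forall X : 'M[R]_N, entrywise_nonneg X -> entrywise_nonneg (Phi P q X)) /\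
      (* P6 *) Phi P q (Jmx R N) = Jmx R N /\
      (* P7 *) (P^T = P -> forall X : 'M[R]_N, psd X -> \tr (Phi P q X) <= \tr X).
Proof.
move=> [P_ge0 rows] /andP[q_ge0 q_le1].
split; first exact: Phi_linear.
split; first exact: Phi_trmx.
split; first exact: Phi_skew.
split; first exact: Phi_psd.
split; first exact: Phi_nonneg.
split; first exact: Phi_J.
by move=> Psym X; apply: Phi_trace_le.
Qed.
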